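(* Let $(\Delta,\mathcal H)$ be a generic cut with associated simplicial complexes $K_\Delta,K_+$ on $\widetilde{[m]}=[m]\cup\{o\}$. For $\sigma\subset\widetilde{[m]}$ let $F_\sigma=\bigcap_{i\in\sigma}H_i$, and let $Z=\{\sigma\subset\widetilde{[m]}: F_\sigma\neq\varnothing\text{ and }F_\sigma\subset\Delta_+\setminus H_o\}$. Then $$K_+\setminus\overline Z=O_{K_+}(o),\qquad K_\Delta\setminus\overline Z=\{\sigma\subset\widetilde{[m]}:F_\sigma\ne\varnothing\text{ and }F_\sigma\subset\Delta_-\setminus H_o\}.$$
   Context: Let $\Delta\subset\mathbb R^n$ be an $n$-dimensional simple polytope $\Delta=\{x:\langle x,\lambda_i\rangle+\eta_i\ge0,\ i=1,\dots,m\}$ whose facets $H_i=\Delta\cap\{\langle x,\lambda_i\rangle+\eta_i=0\}$ are all nonempty. A generic cut is a hyperplane $\mathcal H=\{\langle x,\lambda_0\rangle+\xi=0\}$ in general position with the hyperplanes $\{\langle x,\lambda_i\rangle+\eta_i=0\}$ and with $H_o:=\mathcal H\cap\Delta\neq\varnothing$ (so $H_o$ is the facet indexed by $o$). Set $\Delta_\pm=\Delta\cap\{\pm(\langle x,\lambda_0\rangle+\xi)\ge0\}$, $K_\Delta=\{\sigma\subset[m]:\bigcap_{i\in\sigma}H_i\ne\varnothing\}\cup\{\varnothing\}$, $K_+=\{\sigma\subset\widetilde{[m]}:\bigcap_{i\in\sigma}(H_i\cap\Delta_+)\ne\varnothing\}\cup\{\varnothing\}$. $\overline Z$ is the smallest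 simplicial complex containing $Z$, and $O_{K_+}(o)=\{\sigma\in K_+: o\in\sigma\}$. *)

From HB Require Import structures.
From mathcomp Require Import all_boot all_order all_algebra.
From mathcomp Require Import reals.
Set Implicit Arguments. Unset Strict Implicit. Unset Printing Implicit Defensive.
Import Order.TTheory GRing.Theory Num.Theory.
Local Open Scope ring_scope.

Section Cut.
Variables (R : realType) (n m : nat).
(* Delta = {x : <x, lam i> + eta i >= 0, i in [m]};  cut H = {<x, lam0> + xi = 0}.
   The extended index set [m] ∪ {o} is  option 'I_m, with o = None. *)
Variables (lam : 'I_m -> 'rV[R]_n) (eta : 'I_m -> R) (lam0 : 'rV[R]_n) (xi : R).

Definition dot (x y : 'rV[R]_n) : R := \sum_(j < n) x 0 j * y 0 j.

Definition ineq (i : 'I_m) (x : 'rV[R]_n) : R := dot x (lam i) + eta i.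
Definition inDelta (x : 'rV[R]_n) : Prop := forall i, 0 <= ineq i x.
Definition facet (i : 'I_m) (x : 'rV[R]_n) : Prop := inDelta x /\ ineq i x = 0.

Definition cutval (x : 'rV[R]_n) : R := dot x lam0 + xi.
Definition Ho (x : 'rV[R]_n) : Prop := inDelta x /\ cutval x = 0.
Definition Hface (i : option 'I_m) (x : 'rV[R]_n) : Prop :=
  match i with Some j => facet j x | None => Ho x end.
Definition DeltaP (x : 'rV[R]_n) : Prop := inDelta x /\ 0 <= cutval x.
Definition DeltaM (x : 'rV[R]_n) : Prop := inDelta x /\ cutval x <= 0.

Definition bounded_Delta : Prop :=
  exists B : R, forall x, inDelta x -> forall j, `|x 0 j| <= B.
Definition fulldim_Delta : Prop := exists x, forall i, 0 < ineq i x.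
Definition vertex (x : 'rV[R]_n) : Prop :=
  inDelta x /\ forall y z, inDelta y -> inDelta z -> x = 2^-1 *: (y + z) -> y = z.
Definition simple_Delta : Prop :=
  forall x, vertex x -> #|[set i | ineq i x == 0]| = n.
Definition simple_polytope : Prop :=
  [/\ bounded_Delta, fulldim_Delta & simple_Delta].
Definition facets_nonempty : Prop := forall i, exists x, facet i x.

(* general position of H with respect to the hyperplanes {<x,lam i> + eta i = 0}:
   for every S ⊆ [m] whose affine intersection L_S is nonempty, H meets L_S
   transversally (lam0 not in span of the normals of S) if dim L_S > 0, and
   H misses L_S if L_S is a point. *)
Definition Laff (S : {set 'I_m}) (x : 'rV[R]_n) : Prop :=
  forall i, i \in S -> ineq i x = 0.
Definition normals (S : {set 'I_m}) : 'M[R]_(m, n) :=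
  \matrix_(i < m) (if i \in S then lam i else 0).
Definition general_position : Prop :=
  forall S : {set 'I_m}, (exists x, Laff S x) ->
    ((\rank (normals S) < n)%N -> ~~ (lam0 <= normals S)%MS) /\
    (\rank (normals S) = n -> forall x, Laff S x -> cutval x <> 0).
Definition generic_cut : Prop := general_position /\ exists x, Ho x.

Definition KDelta (s : {set option 'I_m}) : Prop :=
  None \notin s /\ (s = set0 \/ exists x, forall i, i \in s -> Hface i x).
Definition Kplus (s : {set option 'I_m}) : Prop :=
  s = set0 \/ exists x, forall i, i \in s -> (Hface i x /\ DeltaP x).
Definition Oplus (s : {set option 'I_m}) : Prop := Kplus s /\ None \in s.
Definition F (s : {set option 'I_m}) (x : 'rV[R]_n) : Prop :=
  inDelta x /\ forall i, i \in s -> Hface i x.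
Definition Zset (s : {set option 'I_m}) : Prop :=
  (exists x, F s x) /\ forall x, F s x -> DeltaP x /\ ~ Ho x.
(* smallest simplicial complex (containing ∅) containing Z *)
Definition Zbar (s : {set option 'I_m}) : Prop :=
  s = set0 \/ exists t, Zset t /\ s \subset t.
Definition Wminus (s : {set option 'I_m}) : Prop :=
  (exists x, F s x) /\ forall x, F s x -> DeltaM x /\ ~ Ho x.

End Cut.

From HB Require Import structures.
From mathcomp Require Import all_boot all_order all_algebra.
From mathcomp Require Import reals.
From Stdlib Require Import Classical.
From mathcomp Require Import lra.
Import Order.TTheory GRing.Theory Num.Theory.
Local Open Scope ring_scope.

(* Idea: if s does not contain o and F_s has a point with nonnegative cut value,
   then s can be enlarged to a face lying in Delta_+ minus H_o.  From a point x
   of the current face, move in a direction parallel to the face that does not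
   decrease the cut value (towards x from a point of the face on the negative
   side or, when x lies on the cut, a direction transversal to the cut supplied
   by general position) until the first new facet is hit, which happens because
   Delta is bounded.  Every step adds a facet, so the process ends in a face of
   Z.  Hence a face outside Zbar either contains o or lies in Delta_- minus H_o;
   the converse inclusions hold because no face of Z meets H_o. *)

Section Dot.
Context {R : realType} {n : nat}.
Implicit Types (x y z : 'rV[R]_n) (a : R).

Lemma dotDl x y z : dot (x + y) z = dot x z + dot y z.
Proof. by rewrite /dot -big_split; apply: eq_bigr => j _; rewrite mxE mulrDl. Qed.

Lemma dotZl a x y : dot (a *: x) y = a * dot x y.
Proof. by rewrite /dot mulr_sumr; apply: eq_bigr => j _; rewrite mxE mulrA. Qed.

Lemma dotBl x y z : dot (x - y) z = dot x z - dot y z.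
Proof. by rewrite dotDl -scaleN1r dotZl mulN1r. Qed.

Lemma dot0l y : dot 0 y = 0.
Proof. by rewrite /dot big1 // => j _; rewrite mxE mul0r. Qed.

Lemma rowV_neq0_entry {v : 'rV[R]_n} : v != 0 -> exists k, v 0 k != 0.
Proof.
move=> v_neq0; apply/existsP; apply: contraR v_neq0 => /existsPn v0.
by apply/eqP/rowP => k; rewrite [RHS]mxE; apply/eqP/negPn/v0.
Qed.

Lemma dot_trmx_col p (C : 'M[R]_(n, p)) k x : dot (col k C)^T x = (x *m C) 0 k.
Proof. by rewrite /dot mxE; apply: eq_bigr => j _; rewrite !mxE mulrC. Qed.

Lemma notin_rowspace_dir {m} {A : 'M[R]_(m, n)} {v} : ~~ (v <= A)%MS ->
  exists d, 0 < dot d v /\ forall i, dot d (row i A) = 0.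
Proof.
rewrite submxE => vC_neq0; set C := cokermx A in vC_neq0.
have [k vCk] := rowV_neq0_entry vC_neq0.
pose d0 := (col k C)^T; exists (dot d0 v *: d0); split=> [|i].
  by rewrite dotZl -expr2 exprn_even_gt0 //= dot_trmx_col.
by rewrite dotZl [dot d0 (row _ _)]dot_trmx_col -row_mul mulmx_coker !mxE mulr0.
Qed.

End Dot.

Section GenericCut.
Context {R : realType} {n m : nat} {lam : 'I_m -> 'rV[R]_n} {eta : 'I_m -> R}
  {lam0 : 'rV[R]_n} {xi : R}.
Hypothesis Delta_bounded : bounded_Delta lam eta.
Hypothesis cut_general : general_position lam eta lam0 xi.
Implicit Types (s : {set option 'I_m}) (t T : {set 'I_m}) (x y z d : 'rV[R]_n).

Definition face t x : Prop :=
  inDelta lam eta x /\ forall i, i \in t -> ineq lam eta i x = 0.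

Definition face_nonneg t : Prop :=
  exists x, face t x /\ 0 <= cutval lam0 xi x.

Definition face_pos t : Prop :=
  (exists x, face t x) /\ forall x, face t x -> 0 < cutval lam0 xi x.

Lemma ineq_ray i x d a :
  ineq lam eta i (x + a *: d) = ineq lam eta i x + a * dot d (lam i).
Proof. by rewrite /ineq dotDl dotZl addrAC. Qed.

Lemma cutval_ray x d a : cutval lam0 xi (x + a *: d) = cutval lam0 xi x + a * dot d lam0.
Proof. by rewrite /cutval dotDl dotZl addrAC. Qed.

Lemma bounded_recession {x d} : inDelta lam eta x -> d != 0 ->
  exists j, dot d (lam j) < 0.
Proof.
move=> Dx d_neq0; have [j dj_lt0 | dj_ge0] := pickP [pred j | dot d (lam j) < 0].
  by exists j.
have [B HB] := Delta_bounded; have [k dk_neq0] := rowV_neq0_entry d_neq0.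
have B_ge0 : 0 <= B := le_trans (normr_ge0 _) (HB x Dx k).
have dk_gt0 : 0 < `|d 0 k| by rewrite normr_gt0.
pose a := (B + `|x 0 k| + 1) / `|d 0 k|.
have a_ge0 : 0 <= a by rewrite divr_ge0 // !addr_ge0.
have Dxad : inDelta lam eta (x + a *: d).
  move=> i; rewrite ineq_ray addr_ge0 ?Dx // mulr_ge0 // leNgt.
  by have /= -> := dj_ge0 i.
have adk : `|a * d 0 k| = B + `|x 0 k| + 1 by rewrite normrM ger0_norm // divfK ?gt_eqF.
have := HB _ Dxad k; have := lerB_normD (a * d 0 k) (x 0 k).
by rewrite !mxE adk addrC; lra.
Qed.

(* The ray from [x] along [d] leaves Delta, since Delta is bounded; stop at the first
   facet it hits. *)
Lemma ray_exit {t x d} : face t x -> 0 < dot d lam0 ->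
  (forall i, i \in t -> dot d (lam i) = 0) ->
  exists j z, [/\ j \notin t, face (j |: t) z & cutval lam0 xi x <= cutval lam0 xi z].
Proof.
move=> [Dx tx] d_lam0 dt.
have d_neq0 : d != 0 by apply: contraTneq d_lam0 => ->; rewrite dot0l ltxx.
have [j0 j0_neg] := bounded_recession Dx d_neq0.
pose r i := ineq lam eta i x / - dot d (lam i).
have [j j_neg r_min] :=
  @real_arg_minP _ _ j0 [pred i | dot d (lam i) < 0] r j0_neg (fun i _ => num_real (r i)).
have dj_lt0 : dot d (lam j) < 0 := j_neg.
have rj_ge0 : 0 <= r j by rewrite divr_ge0 ?Dx // oppr_ge0 ltW.
exists j, (x + r j *: d); split; last by rewrite cutval_ray lerDl mulr_ge0 // ltW.
  by apply: contraTN dj_lt0 => /dt ->; rewrite ltxx.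
split=> [i | i].
  rewrite ineq_ray; have [di_ge0 | di_lt0] := leP 0 (dot d (lam i)).
    by rewrite addr_ge0 ?Dx // mulr_ge0.
  have := r_min i di_lt0; rewrite [r i]/r ler_pdivlMr ?oppr_gt0 // mulrN; lra.
rewrite in_setU1 => /predU1P [-> | it]; last by rewrite ineq_ray tx // dt // mulr0 addr0.
by rewrite ineq_ray /r invrN mulrN mulNr divfK ?subrr // lt_eqF.
Qed.

(* General position: at a point of the cut, the tight facets cannot pin down the
   cut direction, so some direction parallel to them increases the cut value. *)
Lemma cut_transversal_dir {x} : cutval lam0 xi x = 0 ->
  exists d, 0 < dot d lam0 /\ forall i, ineq lam eta i x = 0 -> dot d (lam i) = 0.
Proof.
move=> cutx0; pose S := [set i | ineq lam eta i x == 0].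
have LSx : Laff lam eta S x by move=> i; rewrite inE => /eqP.
have [rank_lt rank_eq] := cut_general S (ex_intro _ x LSx).
have rank_ltn : (\rank (normals lam S) < n)%N.
  by rewrite ltn_neqAle rank_leq_col andbT; apply/eqP => /rank_eq /(_ x LSx cutx0).
have [d [d_lam0 dS]] := notin_rowspace_dir (rank_lt rank_ltn).
exists d; split=> // i xi0; rewrite -(dS i); congr dot; apply/rowP => j.
by rewrite !mxE inE xi0 eqxx.
Qed.

Lemma face_nonneg_step t :
  face_nonneg t -> face_pos t \/ exists2 t' : {set 'I_m}, t \proper t' & face_nonneg t'.
Proof.
move=> [x [[Dx tx] cutx_ge0]].
have exit T d :
    t \subset T -> face T x -> 0 < dot d lam0 -> (forall i, i \in T -> dot d (lam i) = 0) ->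
  exists2 t' : {set 'I_m}, t \proper t' & face_nonneg t'.
  move=> tT Tx d_lam0 dT; have [j [z [jT jTz cutxz]]] := ray_exit Tx d_lam0 dT.
  exists (j |: T); last by exists z; split; last exact: le_trans cutxz.
  by apply: sub_proper_trans tT _; rewrite -{1}(setU1K jT) properD1 // setU11.
have [cutx0 | cutx_neq0] := eqVneq (cutval lam0 xi x) 0.
  have [d [d_lam0 d_tight]] := cut_transversal_dir cutx0.
  right; apply: (exit [set i | ineq lam eta i x == 0] d) => //.
  - by apply/subsetP => i /tx xi0; rewrite inE xi0.
  - by split=> // i; rewrite inE => /eqP.
  - by move=> i; rewrite inE => /eqP /d_tight.
have cutx_gt0 : 0 < cutval lam0 xi x by rewrite lt0r cutx_neq0.
case: (classic (exists2 y, face t y & cutval lam0 xi y <= 0)) => [[y [_ ty] cuty_le0] | no_y].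
  right; apply: (exit t (x - y) (subxx t)) => //.
  - by rewrite dotBl; move: cutx_gt0 cuty_le0; rewrite /cutval; lra.
  - by move=> i it; rewrite dotBl; move: (tx i it) (ty i it); rewrite /ineq; lra.
left; split=> [|y ty]; first by exists x.
by rewrite ltNge; apply/negP => cuty_le0; apply: no_y; exists y.
Qed.

Lemma face_nonneg_extend t :
  face_nonneg t -> exists2 t' : {set 'I_m}, t \subset t' & face_pos t'.
Proof.
have [k] := ubnP #|~: t|; elim: k t => // k IH t ltk /face_nonneg_step [tpos | [t' tt' t'nn]].
  by exists t.
have [|t'' t't'' t''pos] := IH t' _ t'nn.
  by rewrite -ltnS (leq_trans _ ltk) // ltnS; apply: proper_card; rewrite properC.
by exists t''; first exact: subset_trans (proper_sub tt') t't''.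
Qed.

Lemma F_Some_face t x : F lam eta lam0 xi (Some @: t) x <-> face t x.
Proof.
split=> [[Dx tx] | [Dx tx]]; split=> //.
- by move=> i it; have [] := tx _ (imset_f Some it).
- by move=> _ /imsetP [i it ->]; split; [exact: Dx | exact: tx].
Qed.

Lemma Zbar_of_nonneg {s x} : None \notin s -> F lam eta lam0 xi s x ->
  0 <= cutval lam0 xi x -> Zbar lam eta lam0 xi s.
Proof.
move=> os [Dx sx] cutx; pose t := [set i | Some i \in s].
have tx : face t x by split=> // i; rewrite inE => /sx [].
have [t' tt' [[y t'y] t'pos]] := face_nonneg_extend t (ex_intro _ x (conj tx cutx)).
right; exists (Some @: t'); split.
  split=> [|z /F_Some_face t'z]; first by exists y; apply/F_Some_face.
  have cutz_gt0 := t'pos z t'z.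
  split; first by split; [case: t'z | exact: ltW].
  by case=> _ cutz0; rewrite cutz0 ltxx in cutz_gt0.
apply/subsetP => -[i|] si; last by rewrite si in os.
by apply: imset_f; apply: (subsetP tt'); rewrite inE.
Qed.

Lemma Hface_inDelta i x : Hface lam eta lam0 xi i x -> inDelta lam eta x.
Proof. by case: i => [i|] []. Qed.

Lemma F_of_Hface s x : s != set0 ->
  (forall i, i \in s -> Hface lam eta lam0 xi i x) -> F lam eta lam0 xi s x.
Proof. by case/set0Pn => i si sx; split=> //; exact: Hface_inDelta (sx i si). Qed.

Lemma Zbar_notin_o s : Zbar lam eta lam0 xi s -> None \notin s.
Proof.
case=> [-> | [t [[[x tx] tZ] st]]]; first by rewrite in_set0.
by apply/negP => /(subsetP st) ot; have [_ []] := tZ x tx; exact: tx.2 None ot.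
Qed.

Lemma o_in_Kplus_notZbar s :
  Kplus lam eta lam0 xi s -> ~ Zbar lam eta lam0 xi s -> None \in s.
Proof.
move=> [-> | [x sx]] sNZ; first by case: sNZ; left.
have [s0 | s_neq0] := eqVneq s set0; first by case: sNZ; left.
case: (boolP (None \in s)) => // os; case: sNZ; apply: (Zbar_of_nonneg os (x := x)).
  by apply: F_of_Hface => // i /sx [].
by have /set0Pn [o so] := s_neq0; have [_ [_]] := sx o so.
Qed.

Lemma KDelta_notZbar_Wminus s :
  KDelta lam eta lam0 xi s -> ~ Zbar lam eta lam0 xi s -> Wminus lam eta lam0 xi s.
Proof.
move=> [os [-> | [x sx]]] sNZ; first by case: sNZ; left.
have [s0 | s_neq0] := eqVneq s set0; first by case: sNZ; left.
split=> [|y sy]; first by exists x; apply: F_of_Hface.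
have cuty_lt0 : cutval lam0 xi y < 0.
  by rewrite ltNge; apply/negP => /(Zbar_of_nonneg os sy).
split; first by split; [case: sy | exact: ltW].
by case=> _ cuty0; rewrite cuty0 ltxx in cuty_lt0.
Qed.

Lemma Wminus_KDelta s : Wminus lam eta lam0 xi s -> KDelta lam eta lam0 xi s.
Proof.
move=> [[x sx] sneg]; split; last by right; exists x; exact: sx.2.
by apply/negP => os; have [_ []] := sneg x sx; exact: sx.2 None os.
Qed.

Lemma Wminus_notZbar s : (exists w, Ho lam eta lam0 xi w) ->
  Wminus lam eta lam0 xi s -> ~ Zbar lam eta lam0 xi s.
Proof.
move=> [w Hw] [_ sneg] [s0 | [t [[[y ty] tZ] st]]].
  have sw : F lam eta lam0 xi s w by split=> [|i]; [case: Hw | rewrite s0 in_set0].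
  by have [_ []] := sneg w sw.
have sy : F lam eta lam0 xi s y by split=> [|i /(subsetP st)]; [case: ty | apply: ty.2].
have [[_ cuty_le0] _] := sneg y sy; have [[Dy cuty_ge0] []] := tZ y ty.
by split=> //; apply/eqP; rewrite eq_le cuty_le0 cuty_ge0.
Qed.

End GenericCut.

Theorem lemma3p11 (R : realType) (n m : nat)
  (lam : 'I_m -> 'rV[R]_n) (eta : 'I_m -> R) (lam0 : 'rV[R]_n) (xi : R) :
  simple_polytope lam eta ->
  facets_nonempty lam eta ->
  generic_cut lam eta lam0 xi ->
  (forall s : {set option 'I_m},
     Kplus lam eta lam0 xi s /\ ~ Zbar lam eta lam0 xi s <-> Oplus lam eta lam0 xi s) /\
  (forall s : {set option 'I_m},
     KDelta lam eta lam0 xi s /\ ~ Zbar lam eta lam0 xi s <-> Wminus lam eta lam0 xi s).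
Proof.
move=> [bounded _ _] _ [general Ho_ne]; split=> s; split.
- by case=> Ks sNZ; split; last exact: (o_in_Kplus_notZbar bounded general).
- by case=> Ks os; split=> // /Zbar_notin_o; rewrite os.
- by case=> Ks sNZ; exact: (KDelta_notZbar_Wminus bounded general).
- by move=> Ws; split; [exact: Wminus_KDelta | exact: Wminus_notZbar].
Qed.
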